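(* Let $1\le p\le\infty$ and let $X$ be an Asymptotic $\ell_p$ space. Then $X$ admits a uniformly unique $l$-joint spreading model with respect to $\mathscr{F}_0(X)$, and every $l$-joint spreading model generated by sequences from $\mathscr{F}_0(X)$ is equivalent to the unit vector basis of $\ell_p$ (of $c_0$ if $p=\infty$).
   Context: $\mathscr{F}_0(X)$ is the set of normalized weakly null Schauder basic sequences in $X$. For $n\in\mathbb{N}$ and $C\ge1$, the game $G(p,n,C)$ has $n$ rounds; in each round player (S) chooses a closed finite-codimensional subspace $Y$ of $X$ and player (V) chooses a norm-one $y\in Y$; (S) wins if the resulting $(y_i)_{i=1}^n$ is $C$-equivalent to the unit vector basis of $\ell_p^n$ ($c_0^n$ if $p=\infty$). $X$ is Asymptotic $\ell_p$ (or $C$-Asymptotic $\ell_p$) if there is $C$ such that for every $n$, (S) has a winning strategy in $G(p,n,C)$. For infinite $M\subset\mathbb{N}$ with elements $M(1)<M(2)<\cdots$, a strict plegma family in $[M]^k$ is a sequence $(s_i)_{i=1}^l$ of $k$-element subsets $s_i=\{s_i(1)<\cdots<s_i(k)\}$ of $M$ with $s_{i_1}(j_1)<s_{i_2}(j_2)$ whenever $j_1<j_2$ and $s_{i_1}(j)<s_{i_2}(j)$ whenever $i_1<i_2$. An $l$-tuple $((x^i_n)_n)_{i=1}^l$ generates $(e^i_n)_{i\le l,n}$ (in a Banach space $(E,\|\cdot\|_* )$) as an $l$-joint spreading model if for some infinite $M$ there is a null sequence $(\delta_k)$ with $\big|\|\sum_{j\le k}\sum_{i\le l}a_{ij}x^i_{s_i(j)}\|-\|\sum_{j\le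 k}\sum_{i\le l}a_{ij}e^i_j\|_*\big|<\delta_k$ for all $k$, all $(a_{ij})\subset[-1,1]$ and all strict plegma families $(s_i)$ in $[M]^k$ with $M(k)\le s_1(1)$. Two families indexed by the same set are $K$-equivalent if there are $c,C>0$, $C/c\le K$, with $c\|\sum a_{ij}e^i_j\|\le\|\sum a_{ij}f^i_j\|\le C\|\sum a_{ij}e^i_j\|$. $X$ admits a uniformly unique $l$-joint spreading model with respect to $\mathscr{F}$ if there is $K>0$ such that for every $l$, any two $l$-joint spreading models generated by $l$-tuples of sequences in $\mathscr{F}$ are $K$-equivalent. *)

From HB Require Import structures.
From mathcomp Require Import all_boot all_order all_algebra.
From mathcomp Require Import all_classical all_reals all_analysis.
Set Implicit Arguments. Unset Strict Implicit. Unset Printing Implicit Defensive.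
Import Order.TTheory GRing.Theory Num.Theory.
Import numFieldNormedType.Exports.
Local Open Scope classical_set_scope.
Local Open Scope ring_scope.

Definition lpnorm {R : realType} (p : \bar R) {I : finType} (a : I -> R) : R :=
  match p with
  | EFin q => (\sum_(i : I) `|a i| `^ q) `^ q^-1
  | EPInf => \big[Num.max/0]_(i : I) `|a i|
  | ENInf => 0
  end.

Definition is_linear_functional {R : realType} {X : normedModType R} (f : X -> R) :=
  forall (a : R) (x y : X), f (a *: x + y) = a * f x + f y.

Definition weakly_null {R : realType} {X : normedModType R} (xs : nat -> X) :=
  forall f : X -> R, is_linear_functional f -> continuous f ->
    (fun n => f (xs n)) @ \oo --> (0 : R).

Definition lin_span {R : realType} {X : normedModType R} (xs : nat -> X) : set X :=
  [set x | exists (n : nat) (a : nat -> R), x = \sum_(i < n) a i *: xs i].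

Definition schauder_basic {R : realType} {X : normedModType R} (xs : nat -> X) :=
  forall x : X, closure (lin_span xs) x ->
    exists! a : nat -> R, (fun n => \sum_(i < n) a i *: xs i) @ \oo --> x.

Definition F0 {R : realType} {X : normedModType R} (xs : nat -> X) :=
  (forall n, `|xs n| = 1) /\ weakly_null xs /\ schauder_basic xs.

Definition fin_codim_closed {R : realType} {X : normedModType R} (Y : set X) :=
  closed Y /\ Y 0 /\ (forall (a : R) x y, Y x -> Y y -> Y (a *: x + y)) /\
  exists (m : nat) (z : 'I_m -> X), forall x : X,
    exists (y : X) (b : 'I_m -> R), Y y /\ x = y + \sum_(i < m) b i *: z i.

Definition equiv_lp_fin {R : realType} {X : normedModType R} (p : \bar R) (C : R)
    (n : nat) (y : nat -> X) :=
  exists c C' : R, 0 < c /\ 0 < C' /\ C' / c <= C /\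
    forall a : 'I_n -> R,
      c * lpnorm p a <= `|\sum_(i < n) a i *: y (val i)| /\
      `|\sum_(i < n) a i *: y (val i)| <= C' * lpnorm p a.

(* a strategy of (S) in G(p,n,C): given the history (y_1,...,y_{i-1}) of (V)'s moves,
   it chooses a closed finite-codimensional subspace; it is winning if every play
   consistent with it is won by (S). *)
Definition winning_strategy {R : realType} {X : normedModType R} (p : \bar R) (n : nat)
    (C : R) (sigma : seq X -> set X) :=
  (forall h, fin_codim_closed (sigma h)) /\
  forall y : nat -> X,
    (forall i, (i < n)%N -> sigma (mkseq y i) (y i) /\ `|y i| = 1) ->
    equiv_lp_fin p C n y.

Definition asymptotic_lp {R : realType} (p : \bar R) (X : normedModType R) :=
  exists C : R, 1 <= C /\
    forall n : nat, exists sigma : seq X -> set X, winning_strategy p n C sigma.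

(* infinite M subset of N is encoded by its increasing enumeration m (M(t+1) = m t). *)
Definition strict_plegma (l k : nat) (m : nat -> nat) (s : 'I_l -> 'I_k -> nat) :=
  (forall i j, exists t, s i j = m t) /\
  (forall (i1 i2 : 'I_l) (j1 j2 : 'I_k), (j1 < j2)%N -> (s i1 j1 < s i2 j2)%N) /\
  (forall (i1 i2 : 'I_l) (j : 'I_k), (i1 < i2)%N -> (s i1 j < s i2 j)%N).

Definition jsm_generates {R : realType} {X : normedModType R} {l : nat}
    (xs : 'I_l -> nat -> X) {E : normedModType R} (e : 'I_l -> nat -> E) :=
  exists m : nat -> nat, (forall t, (m t < m t.+1)%N) /\
  exists delta : nat -> R, delta @ \oo --> (0 : R) /\
  forall (k : nat) (a : 'I_l -> 'I_k -> R) (s : 'I_l -> 'I_k -> nat),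
    (forall i j, `|a i j| <= 1) ->
    strict_plegma m s ->
    (forall (i0 : 'I_l) (j0 : 'I_k), val i0 = 0%N -> val j0 = 0%N -> (m k.-1 <= s i0 j0)%N) ->
    `| `|\sum_(j < k) \sum_(i < l) a i j *: xs i (s i j)|
       - `|\sum_(j < k) \sum_(i < l) a i j *: e i (val j)| | < delta k.

Definition K_equiv {R : realType} {l : nat} (K : R) {E1 E2 : normedModType R}
    (e1 : 'I_l -> nat -> E1) (e2 : 'I_l -> nat -> E2) :=
  exists c C : R, 0 < c /\ 0 < C /\ C / c <= K /\
    forall (k : nat) (a : 'I_l -> 'I_k -> R),
      c * `|\sum_(j < k) \sum_(i < l) a i j *: e1 i (val j)|
        <= `|\sum_(j < k) \sum_(i < l) a i j *: e2 i (val j)| /\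
      `|\sum_(j < k) \sum_(i < l) a i j *: e2 i (val j)|
        <= C * `|\sum_(j < k) \sum_(i < l) a i j *: e1 i (val j)|.

Definition equiv_lp_basis {R : realType} (p : \bar R) {l : nat} {E : normedModType R}
    (e : 'I_l -> nat -> E) :=
  exists c C : R, 0 < c /\ 0 < C /\
    forall (k : nat) (a : 'I_l -> 'I_k -> R),
      c * lpnorm p (fun ij : 'I_l * 'I_k => a ij.1 ij.2)
        <= `|\sum_(j < k) \sum_(i < l) a i j *: e i (val j)| /\
      `|\sum_(j < k) \sum_(i < l) a i j *: e i (val j)|
        <= C * lpnorm p (fun ij : 'I_l * 'I_k => a ij.1 ij.2).

Definition uniformly_unique_jsm {R : realType} (X : normedModType R) :=
  exists K : R, 0 < K /\
    forall (l : nat), (0 < l)%N ->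
    forall (xs ys : 'I_l -> nat -> X)
           (E1 : completeNormedModType R) (e1 : 'I_l -> nat -> E1)
           (E2 : completeNormedModType R) (e2 : 'I_l -> nat -> E2),
      (forall i, F0 (xs i)) -> (forall i, F0 (ys i)) ->
      jsm_generates xs e1 -> jsm_generates ys e2 -> K_equiv K e1 e2.

From HB Require Import structures.
From mathcomp Require Import all_boot all_order all_algebra.
From mathcomp Require Import all_classical all_reals all_analysis.
From mathcomp Require Import ring lra zify.
Import Order.TTheory GRing.Theory Num.Theory.
Import numFieldNormedType.Exports.
Set Implicit Arguments. Unset Strict Implicit. Unset Printing Implicit Defensive.
Local Open Scope classical_set_scope.
Local Open Scope ring_scope.

(* A weakly null sequence eventually comes arbitrarily close to every closed subspace Y
   of finite codimension: if z_1, ..., z_m span X modulo Y independently, the coordinates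
   of the decomposition X = Y + span z are continuous linear functionals, hence tend to 0
   along the sequence.  So, against a winning strategy of (S) in G(p, K l, C), player (V)
   can answer with norm-one vectors close to far-out terms of the l sequences, visited in
   the interleaved order j l + i along a strict plegma family.  These answers are
   C-equivalent to the unit vector basis of l_p^(K l), while for large K their linear
   combinations approximate those of the joint spreading model.  Hence every l-joint
   spreading model satisfies C^-1 |a|_p <= |sum a e| <= C |a|_p, and any two of them are
   C^4-equivalent. *)

Lemma lipschitz_continuous (R : realType) (V : normedModType R) (f : V -> R) (L : R) :
  0 < L -> (forall x y, `|f x - f y| <= L * `|x - y|) -> continuous f.
Proof.
move=> L0 fL x; apply/cvgrPdist_lt => e e0.
apply/nbhs_ballP; exists (e / L) => [|t]; first by rewrite /= divr_gt0.
rewrite -ball_normE /= => xt; apply: le_lt_trans (fL _ _) _.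
by rewrite mulrC -ltr_pdivlMr.
Qed.

Lemma compact_pos_lower_bound (T : topologicalType) (R : realType) (S : set T) (g : T -> R) :
  compact S -> continuous g -> (forall t, S t -> 0 < g t) ->
  exists2 e, 0 < e & forall t, S t -> e <= g t.
Proof.
move=> S_compact g_cont g_pos.
have gS_closed : closed (g @` S).
  apply: compact_closed; first exact: norm_hausdorff.
  by apply: continuous_compact S_compact; apply: continuous_subspaceT.
have gS0 : ~ (g @` S) 0 by move=> [t St gt0]; have := g_pos t St; rewrite gt0 ltxx.
have : open (~` (g @` S)) by rewrite openC.
rewrite openE => /(_ 0 gS0) /nbhs_ballP [e e0 eB]; exists e => // t St.
rewrite leNgt; apply/negP => lt_e; apply: (eB (g t)); last by exists t.
have gt0 := g_pos t St.
by rewrite -ball_normE /= sub0r normrN ger0_norm // ltW.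
Qed.

Section WeaklyNullNearSubspaces.
Variables (R : realType) (X : normedModType R).

Definition lsubspace (Y : set X) :=
  Y 0 /\ forall (a : R) x y, Y x -> Y y -> Y (a *: x + y).

Section LinearSubspace.
Variables (Y : set X) (subY : lsubspace Y).

Lemma lsubspaceZ a x : Y x -> Y (a *: x).
Proof. by move=> Yx; rewrite -[_ *: _]addr0; apply: subY.2 => //; apply: subY.1. Qed.

Lemma lsubspaceD x y : Y x -> Y y -> Y (x + y).
Proof. by move=> Yx Yy; rewrite -[x]scale1r; apply: subY.2. Qed.

Lemma lsubspaceB x y : Y x -> Y y -> Y (x - y).
Proof. by move=> Yx Yy; rewrite -scaleN1r addrC; apply: subY.2. Qed.

End LinearSubspace.

Definition dist_set (Y : set X) (v : X) := inf [set `|v - y| | y in Y].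

Lemma dist_set_le Y v y : Y y -> dist_set Y v <= `|v - y|.
Proof. by move=> Yy; apply: ge_inf; [exists 0 => _ [z _ <-] | exists y]. Qed.

Lemma dist_set_ge0 Y v : Y !=set0 -> 0 <= dist_set Y v.
Proof.
move=> [y Yy]; apply: lb_le_inf => [|_ [z _ <-] //].
by exists `|v - y|; exists y.
Qed.

Lemma dist_set_lipschitz Y v w : Y !=set0 ->
  `|dist_set Y v - dist_set Y w| <= `|v - w|.
Proof.
move=> [y0 Yy0].
have le_dist u u' : dist_set Y u <= dist_set Y u' + `|u - u'|.
  rewrite -lerBlDr; apply: lb_le_inf => [|_ [y Yy <-]]; first by exists `|u' - y0|; exists y0.
  rewrite lerBlDr; apply: le_trans (dist_set_le u Yy) _.
  have -> : u - y = (u' - y) + (u - u') by rewrite [RHS]addrC addrA subrK.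
  exact: ler_normD.
have := le_dist v w; have := le_dist w v; rewrite distrC ler_norml => *.
by apply/andP; split; lra.
Qed.

Lemma dist_set_gt0 Y v : closed Y -> Y !=set0 -> ~ Y v -> 0 < dist_set Y v.
Proof.
move=> clY Yn0 Yv; rewrite lt_neqAle dist_set_ge0 // andbT; apply/negP => /eqP d0.
apply: Yv; apply: clY => B /nbhs_ballP [e e0 eB].
have [_ [y Yy <-] lt_e] : exists2 r, [set `|v - y| | y in Y] r & r < e.
  apply: inf_lt; last by rewrite -/(dist_set Y v) -d0.
  by case: Yn0 => y Yy; exists `|v - y|; exists y.
by exists y; split => //; apply: eB; rewrite -ball_normE.
Qed.

Definition lincomb m (z : 'I_m -> X) (b : 'rV[R]_m) : X := \sum_(j < m) b ord0 j *: z j.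

Fact lincomb_is_linear m (z : 'I_m -> X) : linear (lincomb z).
Proof.
move=> a b c; rewrite /lincomb scaler_sumr -big_split; apply: eq_bigr => j _.
by rewrite !mxE scalerDl scalerA.
Qed.

HB.instance Definition _ m (z : 'I_m -> X) :=
  GRing.isLinear.Build R 'rV[R]_m X *:%R (lincomb z) (lincomb_is_linear z).

Lemma row_coord_le_norm m (b : 'rV[R]_m) j : `|b ord0 j| <= `|b|.
Proof.
change (`|b ord0 j| <= mx_norm b); rewrite mx_normrE.
exact: (le_bigmax _ (fun ij : 'I_1 * 'I_m => `|b ij.1 ij.2|) (ord0, j)).
Qed.

Lemma norm_lincomb_le m (z : 'I_m -> X) b : `|lincomb z b| <= `|b| * \sum_(j < m) `|z j|.
Proof.
rewrite mulr_sumr; apply: le_trans (ler_norm_sum _ _ _) _; apply: ler_sum => j _.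
by rewrite normrZ ler_wpM2r // row_coord_le_norm.
Qed.

Definition free_mod (Y : set X) m (z : 'I_m -> X) := forall b, Y (lincomb z b) -> b = 0.

Definition spans_mod (Y : set X) m (z : 'I_m -> X) := forall v, exists b, Y (v - lincomb z b).

(* The distance from [Y] is continuous and positive on the compact unit sphere of
   coefficients, hence bounded below there; rescale. *)
Lemma free_mod_lower_bound Y m (z : 'I_m -> X) : closed Y -> lsubspace Y -> free_mod Y z ->
  exists2 c, 0 < c & forall b y, Y y -> c * `|b| <= `|y + lincomb z b|.
Proof.
move=> clY subY freez; have Yn0 : Y !=set0 by exists 0; exact: subY.1.
pose g b := dist_set Y (lincomb z b).
have g_cont : continuous g.
  apply: (@lipschitz_continuous _ _ g (1 + \sum_(j < m) `|z j|)) => [|b b'].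
    by rewrite ltr_pwDl // sumr_ge0.
  apply: le_trans (dist_set_lipschitz _ _ Yn0) _.
  rewrite -linearB mulrC; apply: le_trans (norm_lincomb_le _ _) _.
  by rewrite ler_wpM2l // ?lerDr // sumr_ge0.
pose S := [set b : 'rV[R]_m | `|b| = 1].
have S_compact : compact S.
  apply: bounded_closed_compact.
    rewrite /bounded_set /= /bounded_near; near=> M => b /= ->.
    by near: M; apply: nbhs_pinfty_ge; exact: num_real.
  have -> : S = (fun b : 'rV[R]_m => `|b|) @^-1` [set 1] by [].
  apply: preimage_closed; last exact: closed_eq.
  by move=> b _; apply: norm_continuous.
have [e e0 le_e] : exists2 e, 0 < e & forall b, S b -> e <= g b.
  apply: compact_pos_lower_bound S_compact g_cont _ => b Sb.
  apply: dist_set_gt0 => // /freez b0; move: Sb; rewrite /S /= b0 normr0.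
  by move=> /esym/eqP; rewrite oner_eq0.
exists e => // b y Yy.
have [->|b0] := eqVneq b 0; first by rewrite normr0 mulr0.
have nb0 : 0 < `|b| by rewrite normr_gt0.
have Sb : S (`|b|^-1 *: b) by rewrite /S /= normrZ normfV normr_id mulVf ?gt_eqF.
move: (le_e _ Sb) => /le_trans /(_ (dist_set_le _ (lsubspaceZ subY (- `|b|^-1) Yy))).
rewrite scaleNr opprK linearZ -scalerDr normrZ normfV normr_id addrC.
by rewrite -ler_pdivlMr // mulrC.
Unshelve. all: by end_near.
Qed.

Lemma free_spans_mod_coord Y m (z : 'I_m -> X) :
  closed Y -> lsubspace Y -> free_mod Y z -> spans_mod Y z ->
  exists f : 'I_m -> X -> R,
    (forall j, is_linear_functional (f j) /\ continuous (f j)) /\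
    forall v, Y (v - \sum_(j < m) f j v *: z j).
Proof.
move=> clY subY freez spanz.
have [c c0 lbz] := free_mod_lower_bound clY subY freez.
have [F YF] := choice spanz.
have F_uniq v b : Y (v - lincomb z b) -> F v = b.
  move=> Yb; apply/eqP; rewrite -subr_eq0; apply/eqP/freez.
  have -> : lincomb z (F v - b) = (v - lincomb z b) - (v - lincomb z (F v)).
    by rewrite linearB opprB [RHS]addrC addrA subrK.
  exact: lsubspaceB.
have F_lin a v w : F (a *: v + w) = a *: F v + F w.
  apply: F_uniq; rewrite linearD linearZ opprD addrACA -scalerBr.
  by apply: subY.2; apply: YF.
have F_bound v : c * `|F v| <= `|v|.
  by have := lbz (F v) _ (YF v); rewrite subrK.
exists (fun j v => F v ord0 j); split => [j|v]; last first.
  by congr Y: (YF v); congr (_ - _); apply: eq_bigr.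
split=> [a v w|]; first by rewrite F_lin !mxE.
apply: (@lipschitz_continuous _ _ _ c^-1); first by rewrite invr_gt0.
move=> v w; have -> : F v ord0 j - F w ord0 j = F (v - w) ord0 j.
  by rewrite [v - w]addrC -[- w]scaleN1r F_lin !mxE mulN1r addrC.
rewrite ler_pdivlMl //; apply: le_trans (F_bound (v - w)).
by apply: ler_wpM2l; [exact: ltW | exact: row_coord_le_norm].
Qed.

Lemma weakly_null_near_free_mod Y m (z : 'I_m -> X) (x : nat -> X) :
  closed Y -> lsubspace Y -> free_mod Y z -> spans_mod Y z -> weakly_null x ->
  forall eps, 0 < eps -> \forall n \near \oo, exists y, Y y /\ `|x n - y| < eps.
Proof.
move=> clY subY freez spanz x0 eps eps0.
have [f [f_lc Yf]] := free_spans_mod_coord clY subY freez spanz.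
have : (fun n => \sum_(j < m) f j (x n) *: z j) @ \oo --> \sum_(j < m) 0 *: z j.
  apply: (cvg_big add_continuous) => // j _; apply: cvgZl.
  by have [lf cf] := f_lc j; apply: x0.
rewrite big1 => [|j _]; last exact: scale0r.
move=> /cvgr0_norm_lt /(_ eps eps0); apply: filterS => n lt_eps.
by exists (x n - \sum_(j < m) f j (x n) *: z j); rewrite subKr.
Qed.

Lemma lincomb_lift m (z : 'I_m.+1 -> X) (i : 'I_m.+1) (c : 'rV[R]_m.+1) :
  lincomb z c = c ord0 i *: z i + lincomb (z \o lift i) (\row_j c ord0 (lift i j)).
Proof.
by rewrite /lincomb (bigD1_ord i) //=; congr (_ + _); apply: eq_bigr => j _; rewrite mxE.
Qed.

(* A relation [Y (lincomb z b)] with [b i != 0] expresses [z i] modulo [Y] through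
   the other vectors, which can therefore be dropped. *)
Lemma spans_mod_free Y m (z : 'I_m -> X) : lsubspace Y -> spans_mod Y z ->
  exists m' (z' : 'I_m' -> X), free_mod Y z' /\ spans_mod Y z'.
Proof.
move=> subY; elim: m z => [|m IH] z spanz.
  by exists 0%N, z; split => // b _; apply/rowP => -[].
have [freez|] := pselect (free_mod Y z); first by exists m.+1, z.
rewrite /free_mod => /existsNP [b /not_implyP [Yb b0]].
have [i bi0] : exists i, b ord0 i != 0.
  apply: contrapT => all0; apply/b0/rowP => j; rewrite mxE.
  by apply/eqP/negPn/negP => bj0; apply: all0; exists j.
apply: (IH (z \o lift i)) => v; have [c Yc] := spanz v.
pose k := c ord0 i / b ord0 i.
exists (\row_j (c ord0 (lift i j) - k * b ord0 (lift i j))).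
have -> : lincomb (z \o lift i) (\row_j (c ord0 (lift i j) - k * b ord0 (lift i j))) =
    lincomb z c - k *: lincomb z b.
  rewrite !(lincomb_lift _ i) scalerDr scalerA divfK // [c ord0 i *: _ + _]addrC addrKA.
  rewrite -linearZ -linearB.
  by congr lincomb; apply/rowP => j; rewrite !mxE.
by rewrite opprB addrCA; apply: lsubspaceD => //; apply: lsubspaceZ.
Qed.

Lemma weakly_null_near_fin_codim Y (x : nat -> X) : fin_codim_closed Y -> weakly_null x ->
  forall eps, 0 < eps -> \forall n \near \oo, exists y, Y y /\ `|x n - y| < eps.
Proof.
move=> [clY [Y0 [YL [m [z decomp]]]]] x0; have subY : lsubspace Y by [].
have spanz : spans_mod Y z.
  move=> v; have [y [b [Yy ->]]] := decomp v; exists (\row_j b j).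
  have -> : lincomb z (\row_j b j) = \sum_(j < m) b j *: z j.
    by apply: eq_bigr => j _; rewrite mxE.
  by rewrite addrK.
have [m' [z' [freez' spanz']]] := spans_mod_free subY spanz.
exact: weakly_null_near_free_mod clY subY freez' spanz' x0.
Qed.

Lemma dist_normalize (x y : X) : `|x| = 1 -> y != 0 ->
  `|x - `|y|^-1 *: y| <= 2 * `|x - y|.
Proof.
move=> x1 y0; have ny0 : 0 < `|y| by rewrite normr_gt0.
have -> : x - `|y|^-1 *: y = (x - y) + (1 - `|y|^-1) *: y.
  by rewrite scalerBl scale1r addrA subrK.
apply: le_trans (ler_normD _ _) _; rewrite mulr_natl mulr2n lerD2l.
have -> : `|(1 - `|y|^-1) *: y| = `| `|x| - `|y| |.
  rewrite normrZ -{2}(ger0_norm (ltW ny0)) -normrM mulrBl mul1r mulVf ?gt_eqF //.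
  by rewrite x1 distrC.
exact: ler_dist_dist.
Qed.

Lemma weakly_null_near_fin_codim_sphere Y (x : nat -> X) :
  fin_codim_closed Y -> weakly_null x -> (forall n, `|x n| = 1) ->
  forall eps, 0 < eps ->
  \forall n \near \oo, exists y, [/\ Y y, `|y| = 1 & `|x n - y| < eps].
Proof.
move=> Yfc x0 x1 eps eps0; have subY : lsubspace Y by case: Yfc => _ [? [? _]].
have e0 : 0 < Num.min (eps / 2) 1 by rewrite lt_min divr_gt0 ?ltr01.
apply: filterS (weakly_null_near_fin_codim Yfc x0 e0) => n [y [Yy]].
rewrite lt_min => /andP [lt_xy_eps lt_xy1].
have y0 : y != 0 by apply: contraTneq lt_xy1 => ->; rewrite subr0 x1 ltxx.
exists (`|y|^-1 *: y); split; first exact: lsubspaceZ.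
  by rewrite normrZ normfV normr_id mulVf // normr_eq0.
by apply: le_lt_trans (dist_normalize (x1 n) y0) _; rewrite mulrC -ltr_pdivlMr.
Qed.

End WeaklyNullNearSubspaces.

Section LpNorm.
Variables (R : realType) (p : \bar R).
Hypothesis p_ge1 : (1 <= p)%E.

Lemma lpnorm_ge0 (I : finType) (a : I -> R) : 0 <= lpnorm p a.
Proof.
by case: (p) => [q||] //=; [exact: powR_ge0 | exact: bigmax_ge_id].
Qed.

Lemma lpnorm_reindex (I J : finType) (f : I -> J) (a : I -> R) (b : J -> R) :
  injective f -> (forall i, b (f i) = a i) -> (forall j, j \notin codom f -> b j = 0) ->
  lpnorm p b = lpnorm p a.
Proof.
move=> f_inj ba b0; case: p p_ge1 => [q|_|//] /=; last first.
  apply/le_anti/andP; split; apply/bigmax_leP; split; try exact: bigmax_ge_id.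
    move=> j _; case: (boolP (j \in codom f)) => [/codomP [i ->]|/b0 ->].
      by rewrite ba (le_bigmax _ (fun i => `|a i|)).
    by rewrite normr0; exact: bigmax_ge_id.
  by move=> i _; rewrite -ba (le_bigmax _ (fun j => `|b j|)).
rewrite lee_fin => q_ge1; congr (_ `^ _).
rewrite (bigID (mem (codom f))) /= [X in _ + X]big1 ?addr0 => [|j /b0 ->]; last first.
  by rewrite normr0 powR0 // gt_eqF // (lt_le_trans ltr01).
rewrite -big_uniq /=; last by rewrite map_inj_uniq ?enum_uniq.
by rewrite big_image; apply: eq_bigr => i _; rewrite ba.
Qed.

Lemma lpnorm_delta (I : finType) (i0 : I) : lpnorm p (fun i => (i == i0)%:R) = 1.
Proof.
rewrite (@lpnorm_reindex 'I_1 _ (fun=> i0) (fun=> 1)); last 3 first.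
- by move=> i i' _; rewrite !ord1.
- by move=> i; rewrite eqxx.
- by move=> j; case: eqP => [-> /negP[]|//]; apply: codom_f ord0.
case: p p_ge1 => [q|_|//] /=.
  by rewrite big_ord_recr big_ord0 normr1 powR1 /= add0r powR1.
rewrite normr1; apply/le_anti/andP; split; last exact: (le_bigmax _ (fun=> 1) ord0).
by apply/bigmax_leP; split => //; exact: ler01.
Qed.

Lemma lpnormZ (I : finType) (t : R) (a : I -> R) : 0 <= t ->
  lpnorm p (fun i => t * a i) = t * lpnorm p a.
Proof.
move=> t0; case: p p_ge1 => [q|_|//] /=; last first.
  under eq_bigr do rewrite normrM (ger0_norm t0).
  by rewrite (big_morph (fun x => t * x) (fun x y => maxr_pMr x y t0) (mulr0 t)).
rewrite lee_fin => q_ge1; have q0 : q != 0 by rewrite gt_eqF // (lt_le_trans ltr01).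
under eq_bigr do rewrite normrM (ger0_norm t0) powRM //.
rewrite -mulr_sumr powRM ?powR_ge0 ?sumr_ge0 // -powRrM mulfV // powRr1 //.
Qed.

End LpNorm.

Section Interleave.
Variables (l K : nat).

Fact interleave_subproof (ij : 'I_l * 'I_K) : (ij.2 * l + ij.1 < K * l)%N.
Proof. by case: ij => [[i /= ?] [j /= ?]]; nia. Qed.

Definition interleave (ij : 'I_l * 'I_K) : 'I_(K * l) := Ordinal (interleave_subproof ij).

Hypothesis l_gt0 : (0 < l)%N.

Fact deinterleave_subproof (r : 'I_(K * l)) : (r %/ l < K)%N.
Proof. by rewrite ltn_divLR. Qed.

Definition deinterleave (r : 'I_(K * l)) : 'I_l * 'I_K :=
  (Ordinal (ltn_pmod r l_gt0), Ordinal (deinterleave_subproof r)).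

Lemma interleaveK : cancel interleave deinterleave.
Proof.
move=> [i j]; congr pair; apply/val_inj => /=.
  by rewrite modnMDl modn_small.
by rewrite divnMDl // divn_small // addn0.
Qed.

Lemma deinterleaveK : cancel deinterleave interleave.
Proof. by move=> r; apply/val_inj => /=; rewrite -divn_eq. Qed.

End Interleave.

Section DoubleSums.
Variables (R : realType) (p : \bar R).
Hypothesis p_ge1 : (1 <= p)%E.

Definition lp_bounds l (V : normedModType R) (c C : R) (e : 'I_l -> nat -> V) :=
  forall k (a : 'I_l -> 'I_k -> R),
    c * lpnorm p (fun ij : 'I_l * 'I_k => a ij.1 ij.2)
      <= `|\sum_(j < k) \sum_(i < l) a i j *: e i j| /\
    `|\sum_(j < k) \sum_(i < l) a i j *: e i j|
      <= C * lpnorm p (fun ij : 'I_l * 'I_k => a ij.1 ij.2).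

Lemma equiv_lp_fin_bounds (V : normedModType R) C n (y : nat -> V) :
  (0 < n)%N -> `|y 0%N| = 1 -> equiv_lp_fin p C n y ->
  forall a : 'I_n -> R,
    C^-1 * lpnorm p a <= `|\sum_(r < n) a r *: y r| /\
    `|\sum_(r < n) a r *: y r| <= C * lpnorm p a.
Proof.
move=> n0 y01 [c [C' [c0 [C'0 [C'c bounds]]]]] a.
have [c_le1 C'_ge1] : c <= 1 /\ 1 <= C'.
  have := bounds (fun r => (r == Ordinal n0)%:R); rewrite lpnorm_delta // mulr1.
  rewrite (bigD1 (Ordinal n0)) //= scale1r big1 => [|r /negPf ->]; last exact: scale0r.
  by rewrite addr0 y01 mulr1 => -[].
have C'_le : C' <= C * c by rewrite -ler_pdivrMr.
have C_gt0 : 0 < C by rewrite -(pmulr_lgt0 _ c0); apply: lt_le_trans C'_le.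
have lp0 := lpnorm_ge0 p a; have [lb ub] := bounds a.
split; [apply: le_trans lb | apply: le_trans ub _]; apply: ler_wpM2r => //.
  by rewrite -(ler_pM2l C_gt0) mulfV ?gt_eqF //; apply: le_trans C'_le.
by apply: le_trans C'_le _; rewrite ler_piMr // ltW.
Qed.

Section InterleaveSums.
Variables (l K : nat) (l_gt0 : (0 < l)%N).

Lemma lpnorm_interleave (A : 'I_l -> 'I_K -> R) :
  lpnorm p (fun r => A (deinterleave l_gt0 r).1 (deinterleave l_gt0 r).2) =
  lpnorm p (fun ij : 'I_l * 'I_K => A ij.1 ij.2).
Proof.
apply: (lpnorm_reindex p_ge1 (can_inj (interleaveK l_gt0))) => [ij|r].
  by rewrite interleaveK.
by rewrite -[r](deinterleaveK l_gt0) codom_f.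
Qed.

Lemma sum_interleave (V : lmodType R) (A : 'I_l -> 'I_K -> R) (y : nat -> V) :
  \sum_(r < K * l) A (deinterleave l_gt0 r).1 (deinterleave l_gt0 r).2 *: y r =
  \sum_(j < K) \sum_(i < l) A i j *: y (j * l + i)%N.
Proof.
rewrite (reindex (@interleave l K)); last first.
  by apply/onW_bij; exists (deinterleave l_gt0); [exact: interleaveK | exact: deinterleaveK].
by rewrite exchange_big pair_big; apply: eq_bigr => -[i j] _; rewrite (interleaveK l_gt0).
Qed.

Lemma interleave_bounds (V : normedModType R) (c C : R) (y : nat -> V) :
  (forall a : 'I_(K * l) -> R,
    c * lpnorm p a <= `|\sum_(r < K * l) a r *: y r| /\
    `|\sum_(r < K * l) a r *: y r| <= C * lpnorm p a) ->
  forall A : 'I_l -> 'I_K -> R,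
    c * lpnorm p (fun ij : 'I_l * 'I_K => A ij.1 ij.2)
      <= `|\sum_(j < K) \sum_(i < l) A i j *: y (j * l + i)%N| /\
    `|\sum_(j < K) \sum_(i < l) A i j *: y (j * l + i)%N|
      <= C * lpnorm p (fun ij : 'I_l * 'I_K => A ij.1 ij.2).
Proof.
by move=> bounds A; rewrite -lpnorm_interleave -sum_interleave; apply: bounds.
Qed.

End InterleaveSums.

Definition pad0 l k (a : 'I_l -> 'I_k -> R) (i : 'I_l) (j : nat) : R := oapp (a i) 0 (insub j).

Lemma sum_pad0 (V : lmodType R) l k K (a : 'I_l -> 'I_k -> R) (e : 'I_l -> nat -> V) :
  (k <= K)%N ->
  \sum_(j < K) \sum_(i < l) pad0 a i j *: e i j = \sum_(j < k) \sum_(i < l) a i j *: e i j.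
Proof.
move=> le_kK.
have -> : \sum_(j < k) \sum_(i < l) a i j *: e i j =
    \sum_(j < k) \sum_(i < l) pad0 a i j *: e i j.
  by apply: eq_bigr => j _; apply: eq_bigr => i _; rewrite /pad0 valK.
rewrite (big_ord_widen K (fun j => \sum_(i < l) pad0 a i j *: e i j) le_kK).
rewrite [RHS]big_mkcond; apply: eq_bigr => j _.
case: ltnP => // le_kj; rewrite big1 // => i _.
by rewrite /pad0 insubF ?scale0r // ltnNge le_kj.
Qed.

Lemma lpnorm_pad0 l k K (a : 'I_l -> 'I_k -> R) : (k <= K)%N ->
  lpnorm p (fun ij : 'I_l * 'I_K => pad0 a ij.1 ij.2) =
  lpnorm p (fun ij : 'I_l * 'I_k => a ij.1 ij.2).
Proof.
move=> le_kK; pose w (ij : 'I_l * 'I_k) := (ij.1, widen_ord le_kK ij.2).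
apply: (lpnorm_reindex p_ge1 (f := w)) => [[i j] [i' j'] [-> /val_inj ->] //|[i j]|[i j]].
  by rewrite /pad0 /= valK.
rewrite /pad0 /=; case: insubP => //= j' _ jj' /negP[]; apply/codomP.
by exists (i, j'); congr pair; apply/val_inj.
Qed.

Lemma norm_double_sum_close (V : normedModType R) l K (a : 'I_l -> 'I_K -> R)
    (f g : 'I_l -> 'I_K -> V) (eps : R) :
  (forall i j, `|a i j| <= 1) -> (forall i j, `|f i j - g i j| <= eps) ->
  `| `|\sum_(j < K) \sum_(i < l) a i j *: f i j|
     - `|\sum_(j < K) \sum_(i < l) a i j *: g i j| | <= (K * l)%:R * eps.
Proof.
move=> a1 fg; apply: le_trans (ler_dist_dist _ _) _.
have -> : (K * l)%:R * eps = \sum_(j < K) \sum_(i < l) eps.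
  by rewrite !sumr_const !card_ord mulr_natl mulnC mulrnA.
rewrite -sumrB; apply: le_trans (ler_norm_sum _ _ _) _; apply: ler_sum => j _.
rewrite -sumrB; apply: le_trans (ler_norm_sum _ _ _) _; apply: ler_sum => i _.
by rewrite -scalerBr normrZ -[eps]mul1r ler_pM.
Qed.

Lemma K_equiv_of_lp_bounds l (V1 V2 : normedModType R) (c C : R)
    (e1 : 'I_l -> nat -> V1) (e2 : 'I_l -> nat -> V2) :
  0 < c -> 0 < C -> lp_bounds c C e1 -> lp_bounds c C e2 -> K_equiv ((C / c) ^+ 2) e1 e2.
Proof.
move=> c0 C0 b1 b2; have cC0 : 0 <= c / C by rewrite divr_ge0 ?ltW.
exists (c / C), (C / c); split; first by rewrite divr_gt0.
split; first by rewrite divr_gt0.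
split; first by rewrite invf_div expr2.
move=> k a; have [lb1 ub1] := b1 k a; have [lb2 ub2] := b2 k a; split.
  apply: le_trans (ler_wpM2l cC0 ub1) _.
  by rewrite mulrA divfK ?gt_eqF.
apply: le_trans ub2 _; rewrite -[C in C * _](@divfK _ c) ?gt_eqF // -[C / c * c * _]mulrA.
by apply: ler_wpM2l lb1; rewrite divr_ge0 ?ltW.
Qed.

End DoubleSums.

Lemma eq_in_mkseq (T : Type) (f g : nat -> T) n :
  {in gtn n, f =1 g} -> mkseq f n = mkseq g n.
Proof. by move=> fg; apply/eq_in_map => i; rewrite mem_iota add0n => /fg. Qed.

Section Game.
Variables (R : realType) (X : normedModType R).

Lemma play_near (sigma : seq X -> set X) (v : nat -> nat -> X) (eps : R) (T n : nat) :
  (forall h, fin_codim_closed (sigma h)) ->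
  (forall r Y, fin_codim_closed Y ->
     \forall t \near \oo, exists y, [/\ Y y, `|y| = 1 & `|v r t - y| < eps]) ->
  exists (u : nat -> nat) (y : nat -> X),
    [/\ forall r, (r < n)%N ->
          [/\ sigma (mkseq y r) (y r), `|y r| = 1 & `|v r (u r) - y r| < eps],
        forall r, (r.+1 < n)%N -> (u r < u r.+1)%N & (T <= u 0)%N].
Proof.
move=> sigma_fc v_near; elim: n => [|n [u [y [play u_inc Tu0]]]].
  by exists (fun=> T), (fun=> 0).
have [N _ yN] := v_near n _ (sigma_fc (mkseq y n)).
pose t := maxn N (maxn T (u n.-1).+1).
have [yn [sigma_yn yn1 v_yn]] := yN t (leq_maxl _ _).
exists (fun r => if r == n then t else u r), (fun r => if r == n then yn else y r).
have hist r : (r <= n)%N -> mkseq (fun r => if r == n then yn else y r) r = mkseq y r.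
  by move=> le_rn; apply: eq_in_mkseq => i /= lt_ir; rewrite ltn_eqF // (leq_trans lt_ir).
split => [r|r|].
- rewrite ltnS leq_eqVlt => /orP[/eqP ->|lt_rn]; first by rewrite eqxx hist.
  by rewrite ltn_eqF // hist; [exact: play | exact: ltnW].
- rewrite ltnS leq_eqVlt => /orP[/eqP rn|lt_rn]; last first.
    by rewrite !ltn_eqF //; [exact: u_inc | exact: ltnW].
  by rewrite -rn eqxx ltn_eqF // /t -rn /= !leq_max ltnSn !orbT.
- by case: eqP => [n0|//]; rewrite /t -n0 !leq_max leqnn !orbT.
Qed.

Lemma interleaved_play l (xs : 'I_l -> nat -> X) (m : nat -> nat)
    (sigma : seq X -> set X) (K : nat) (eps : R) :
  (0 < l)%N -> (forall i, (forall t, `|xs i t| = 1) /\ weakly_null (xs i)) ->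
  (forall t, (m t < m t.+1)%N) -> (forall h, fin_codim_closed (sigma h)) -> 0 < eps ->
  exists (y : nat -> X) (s : 'I_l -> 'I_K -> nat),
    [/\ forall r, (r < K * l)%N -> sigma (mkseq y r) (y r) /\ `|y r| = 1,
        strict_plegma m s,
        (forall (i0 : 'I_l) (j0 : 'I_K), val i0 = 0%N -> val j0 = 0%N ->
           (m K.-1 <= s i0 j0)%N) &
        forall i j, `|xs i (s i j) - y (j * l + i)%N| < eps].
Proof.
move=> l0 xs_wn m_inc sigma_fc eps0.
pose col (r : nat) : 'I_l := Ordinal (ltn_pmod r l0).
have colE (i : 'I_l) j : col (j * l + i)%N = i.
  by apply/val_inj; rewrite /= modnMDl modn_small.
have idx_lt (i : 'I_l) (j : 'I_K) : (j * l + i < K * l)%N := ltn_ord (interleave (i, j)).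
have m_ge t : (t <= m t)%N by elim: t => // t IH; apply: leq_ltn_trans IH (m_inc t).
have v_near r Y : fin_codim_closed Y -> \forall t \near \oo,
    exists y, [/\ Y y, `|y| = 1 & `|xs (col r) (m t) - y| < eps].
  move=> Yfc; have [xs1 xs0] := xs_wn (col r).
  have [N _ near_N] := weakly_null_near_fin_codim_sphere Yfc xs0 xs1 eps0.
  by exists N => // t /= le_Nt; apply: near_N; apply: leq_trans (m_ge t).
have [u [y [play u_inc le_u0]]] := play_near K.-1 (K * l) sigma_fc v_near.
have u_mono : {in gtn (K * l) &, {homo u : a b / (a < b)%N}}.
  apply: homo_ltn_in => [||r]; [exact: ltn_trans | | by rewrite !inE => _ /u_inc].
  by move=> a b _; rewrite !inE => lt_b c /andP[_ lt_cb]; apply: ltn_trans lt_b.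
have m_mono : {homo m : a b / (a < b)%N} := homo_ltn ltn_trans m_inc.
exists y, (fun i j => m (u (j * l + i)%N)); split.
- by move=> r /play [].
- split; first by move=> i j; exists (u (j * l + i)%N).
  split=> [i1 i2 j1 j2 lt_j|i1 i2 j lt_i]; apply/m_mono/u_mono; rewrite ?inE ?idx_lt //.
    by have := ltn_ord i1; nia.
  by rewrite ltn_add2l.
- move=> i0 j0 -> -> /=.
  exact: (homo_leq leqnn leq_trans (fun t => ltnW (m_inc t))).
- by move=> i j; have [_ _] := play _ (idx_lt i j); rewrite colE.
Qed.

End Game.

Section JointSpreadingModels.
Variables (R : realType) (X : normedModType R) (p : \bar R) (C : R).
Hypothesis p_ge1 : (1 <= p)%E.
Hypothesis winning : forall n, exists sigma : seq X -> set X, winning_strategy p n C sigma.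
Variables (l : nat) (xs : 'I_l -> nat -> X) (E : normedModType R) (e : 'I_l -> nat -> E).
Hypothesis l_gt0 : (0 < l)%N.
Hypothesis xs_wn : forall i, (forall t, `|xs i t| = 1) /\ weakly_null (xs i).
Hypothesis xs_e : jsm_generates xs e.

Lemma jsm_bounds_approx k (a : 'I_l -> 'I_k -> R) (eta : R) :
  (forall i j, `|a i j| <= 1) -> 0 < eta ->
  C^-1 * lpnorm p (fun ij : 'I_l * 'I_k => a ij.1 ij.2) - eta
    <= `|\sum_(j < k) \sum_(i < l) a i j *: e i j| /\
  `|\sum_(j < k) \sum_(i < l) a i j *: e i j|
    <= C * lpnorm p (fun ij : 'I_l * 'I_k => a ij.1 ij.2) + eta.
Proof.
move=> a1 eta0; have [m [m_inc [delta [delta0 close]]]] := xs_e.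
have eta2 : 0 < eta / 2 by rewrite divr_gt0.
have [K0 _ delta_small] := cvgr0_norm_lt _ delta0 _ eta2.
pose K := (maxn K0 k).+1.
have le_kK : (k <= K)%N by rewrite ltnW // ltnS leq_maxr.
have le_K0K : (K0 <= K)%N by rewrite ltnW // ltnS leq_maxl.
have Kl_gt0 : (0 < K * l)%N by rewrite muln_gt0 l_gt0.
pose eps := eta / (2 * (K * l)%:R).
have eps0 : 0 < eps by rewrite divr_gt0 // mulr_gt0 // ltr0n.
have [sigma [sigma_fc sigma_win]] := winning (K * l).
have [y [s [play plegma s_far y_close]]] := interleaved_play K l_gt0 xs_wn m_inc sigma_fc eps0.
pose A i (j : 'I_K) := pad0 a i j.
have A1 i j : `|A i j| <= 1 by rewrite /A /pad0; case: insub => [j'|] /=; rewrite ?normr0.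
have := close K A s A1 plegma s_far; rewrite sum_pad0 //.
have := norm_double_sum_close A1 (fun i j => ltW (y_close i j)).
have [] := interleave_bounds p_ge1 l_gt0
  (equiv_lp_fin_bounds p_ge1 Kl_gt0 (play 0%N Kl_gt0).2 (sigma_win y play)) A.
rewrite lpnorm_pad0 //.
have -> : (K * l)%:R * eps = eta / 2.
  by rewrite /eps; field; rewrite !pnatr_eq0 -!lt0n l_gt0.
have /(le_lt_trans (ler_norm _)) := delta_small K le_K0K.
move=> delta_lt lb ub; rewrite ler_distlC ltr_distlC => /andP[? ?] /andP[? ?].
split; lra.
Qed.

Lemma jsm_lp_bounds : lp_bounds p C^-1 C e.
Proof.
move=> k a; pose S := \sum_(ij : 'I_l * 'I_k) `|a ij.1 ij.2|.
have S_ge0 : 0 <= S by apply: sumr_ge0.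
pose t := (1 + S)^-1; have t_gt0 : 0 < t by rewrite invr_gt0; lra.
have ta1 i j : `|t * a i j| <= 1.
  have : `|a i j| <= S by rewrite /S (bigD1 (i, j)) //= lerDl sumr_ge0.
  by rewrite normrM gtr0_norm // ler_pdivrMl ?mulr1; lra.
have [lb ub] : C^-1 * lpnorm p (fun ij : 'I_l * 'I_k => t * a ij.1 ij.2)
      <= `|\sum_(j < k) \sum_(i < l) (t * a i j) *: e i j| /\
    `|\sum_(j < k) \sum_(i < l) (t * a i j) *: e i j|
      <= C * lpnorm p (fun ij : 'I_l * 'I_k => t * a ij.1 ij.2).
  by split; apply/ler_addgt0Pr => eta eta0; have [] := jsm_bounds_approx ta1 eta0; lra.
have scale_sum : \sum_(j < k) \sum_(i < l) (t * a i j) *: e i j =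
    t *: \sum_(j < k) \sum_(i < l) a i j *: e i j.
  rewrite scaler_sumr; apply: eq_bigr => j _.
  by rewrite scaler_sumr; apply: eq_bigr => i _; rewrite scalerA.
move: lb ub; rewrite scale_sum normrZ (gtr0_norm t_gt0) (lpnormZ p_ge1 _ (ltW t_gt0)).
by rewrite !(mulrCA _ t) !ler_pM2l.
Qed.

End JointSpreadingModels.

Theorem corollary4p12 (R : realType) (X : completeNormedModType R) (p : \bar R) :
  (1 <= p)%E -> asymptotic_lp p X ->
  uniformly_unique_jsm X /\
  (forall (l : nat) (xs : 'I_l -> nat -> X)
          (E : completeNormedModType R) (e : 'I_l -> nat -> E),
     (0 < l)%N -> (forall i, F0 (xs i)) -> jsm_generates xs e ->
     equiv_lp_basis p e).
Proof.
move=> p_ge1 [C [C_ge1 winning]].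
have C_gt0 : 0 < C by apply: lt_le_trans C_ge1.
have bounds l (xs : 'I_l -> nat -> X) (E : normedModType R) (e : 'I_l -> nat -> E) :
    (0 < l)%N -> (forall i, F0 (xs i)) -> jsm_generates xs e -> lp_bounds p C^-1 C e.
  by move=> l_gt0 xs_F0; apply: jsm_lp_bounds => // i; have [? [? _]] := xs_F0 i.
split=> [|l xs E e l_gt0 xs_F0 xs_e]; last first.
  by exists C^-1, C; rewrite invr_gt0 C_gt0; split => //; split => //; apply: bounds xs_e.
exists ((C / C^-1) ^+ 2); split; first by rewrite exprn_gt0 // divr_gt0 ?invr_gt0.
move=> l l_gt0 xs ys E1 e1 E2 e2 xs_F0 ys_F0 xs_e1 ys_e2.
apply: K_equiv_of_lp_bounds; rewrite ?invr_gt0 //.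
  exact: bounds xs_e1.
exact: bounds ys_e2.
Qed.
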